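(* If $B$ is a set of colors with $|B|=3$, then $\beta_B=4$.
   Context: Let $K_{2,t}$ be the complete bipartite graph with parts $U=\{u_1,u_2\}$ and $W=\{w_1,\dots,w_t\}$. For an edge coloring $c$ of $K_{2,t}$ (adjacent edges may share colors), the color code of $w\in W$ is the ordered pair $(c(u_1w),c(u_2w))$. A tree is rainbow if no two of its edges share a color; for a vertex set $S$, an $S$-tree is a subtree containing $S$; a $3$-rainbow coloring of a graph is an edge coloring such that every set $S$ of three vertices has a rainbow $S$-tree. The color codes of a subset $Y\subseteq W$ are acceptable if the coloring restricted to the subgraph induced by $Y\cup U$ is a $3$-rainbow coloring of that subgraph. For a set of colors $B$, color codes are $B$-limited if both entries of every color code lie in $B$. $\beta_B$ denotes the maximum number of vertices $|Y|$ (equivalently, the maximum $t$) for which there is an edge coloring whose color codes on $Y$ are both $B$-limited and acceptable. *)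

From mathcomp Require Import all_boot.
Set Implicit Arguments. Unset Strict Implicit. Unset Printing Implicit Defensive.

(* The complete bipartite graph K_{2,t}: vertices are [inl i] (i : bool,
   u_1 = inl false, u_2 = inl true) and [inr w] (w : 'I_t).  The edge
   u_i w is represented by the pair (i, w) : bool * 'I_t.  *)
Definition K2vert (t : nat) : finType := (bool + 'I_t)%type.
Definition K2edge (t : nat) : finType := (bool * 'I_t)%type.

Definition sub_adj t (E : {set K2edge t}) : rel (K2vert t) :=
  fun x y => match x, y with
  | inl i, inr w => (i, w) \in E
  | inr w, inl i => (i, w) \in E
  | _, _ => false
  end.

Definition sub_verts t (E : {set K2edge t}) : {set K2vert t} :=
  [set x | [exists y, sub_adj E x y]].

Definition is_tree t (E : {set K2edge t}) : Prop :=
  (forall x y, x \in sub_verts E -> y \in sub_verts E -> connect (sub_adj E) x y)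
  /\ #|E| = (#|sub_verts E| - 1)%N.

Definition rainbow (C : eqType) t (c : bool -> 'I_t -> C) (E : {set K2edge t}) :=
  {in E &, injective (fun e : K2edge t => c e.1 e.2)}.

Definition three_rainbow (C : eqType) t (c : bool -> 'I_t -> C) : Prop :=
  forall S : {set K2vert t}, #|S| = 3 ->
    exists E : {set K2edge t},
      [/\ is_tree E, S \subset sub_verts E & rainbow c E].

Definition B_good (C : finType) (B : {set C}) (t : nat) : Prop :=
  exists c : bool -> 'I_t -> C,
    (forall i w, c i w \in B) /\ three_rainbow c.

(* Let c be a 3-rainbow colouring of K_{2,t} with colours in B.
   A rainbow tree has at most |B| = 3 edges, hence at most 4 vertices, so a
   rainbow tree spanning three vertices w_a, w_b, w_d of W can only contain
   one vertex of U: it is a star at some u_i, and the row c i is injective on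
   {a, b, d}.  Hence every triple of W is rainbow in one of the two rows
   c false, c true.  A purely combinatorial argument (two_rows_bound) shows
   that two functions into a 3-set with this property live on at most 4
   points: if f x = f y, the row g separates x and y from every other point,
   so g is constant on the remaining (at least 3) points; then f is injective
   on three of them, f x collides with one, and a triple is rainbow in neither
   row.

   Split the six vertices of K_{2,4} into the halves
   {u_2, w_0, w_1} and {u_1, w_2, w_3}; colour the edges between the halves 0
   and, inside each half, the two edges at the U-vertex 1 and 2.  For every
   vertex r there is a rainbow tree (a star or a path of length 3) spanning r
   and the half not containing r, and every 3-set of vertices has at most one
   element in one of the halves, so it is spanned by one of these trees. *)

From mathcomp Require Import all_boot zify.
Set Implicit Arguments. Unset Strict Implicit. Unset Printing Implicit Defensive.

Lemma uniq3 (T : eqType) (a b c : T) :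
  uniq [:: a; b; c] = [&& a != b, a != c & b != c].
Proof. by rewrite /= !inE negb_or andbT andbA. Qed.

Lemma card_set3 (T : finType) (x y z : T) :
  uniq [:: x; y; z] -> #|[set x; y; z]| = 3.
Proof.
move=> /card_uniqP card_xyz; rewrite -[RHS]card_xyz.
by apply: eq_card => v; rewrite !inE orbA.
Qed.

Lemma inj_set3 (T : finType) (C : eqType) (F : T -> C) (x y z : T) :
  uniq [:: F x; F y; F z] -> {in [set x; y; z] &, injective F}.
Proof.
rewrite uniq3 => /and3P [Fxy Fxz Fyz] u v.
rewrite !inE -!orbA => /or3P [] /eqP -> /or3P [] /eqP -> // e;
by move: Fxy Fxz Fyz; rewrite e eqxx.
Qed.

Lemma card_sum_set (T1 T2 : finType) (A : {set T1 + T2}) :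
  #|A| = #|[pred x | inl x \in A]| + #|[pred y | inr y \in A]|.
Proof. by rewrite -!sum1_card big_sumType. Qed.

Section Subgraphs.
Variable t : nat.
Implicit Types (E : {set K2edge t}) (i : bool) (a b d : 'I_t).

Lemma inl_sub_verts E i : (inl i \in sub_verts E) = [exists w, (i, w) \in E].
Proof.
rewrite inE; apply/existsP/existsP => [[[j|w]] //= iwE | [w iwE]].
- by exists w.
- by exists (inr w).
Qed.

Lemma inr_sub_verts E w : (inr w \in sub_verts E) = [exists i, (i, w) \in E].
Proof.
rewrite inE; apply/existsP/existsP => [[[i|v]] //= iwE | [i iwE]].
- by exists i.
- by exists (inl i).
Qed.

Lemma sub_adj_sym E : symmetric (sub_adj E).
Proof. by case=> [i|w] [j|v]. Qed.

Lemma hub_tree E (hub : K2vert t) :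
  {in sub_verts E, forall x, connect (sub_adj E) hub x} ->
  #|E| = (#|sub_verts E| - 1)%N -> is_tree E.
Proof.
move=> reach cardE; split=> // x y /reach hx /reach hy.
by apply: connect_trans hy; rewrite (sym_connect_sym (@sub_adj_sym E)).
Qed.

Definition star i a b d : {set K2edge t} := [set (i, a); (i, b); (i, d)].

Lemma inl_star i a b d j : (inl j \in sub_verts (star i a b d)) = (j == i).
Proof.
rewrite inl_sub_verts; apply/existsP/eqP => [[w]|->].
  by rewrite !inE !xpair_eqE -!andb_orr => /andP [/eqP].
by exists a; rewrite !inE eqxx.
Qed.

Lemma inr_star i a b d w :
  (inr w \in sub_verts (star i a b d)) = (w \in [:: a; b; d]).
Proof.
rewrite inr_sub_verts !inE; apply/existsP/idP => [[j]|w_abd].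
  by rewrite !inE !xpair_eqE -!andb_orr -orbA => /andP [].
by exists i; rewrite !inE !xpair_eqE eqxx -orbA.
Qed.

Lemma star_tree i a b d : uniq [:: a; b; d] -> is_tree (star i a b d).
Proof.
move=> abd; apply: (@hub_tree _ (inl i)) => [[j|w]|].
- by rewrite inl_star => /eqP ->.
- rewrite inr_star !inE orbA => w_abd.
  by apply: connect1; rewrite /= !inE !xpair_eqE eqxx.
have edges3 : uniq [:: (i, a); (i, b); (i, d)].
  by move: abd; rewrite -(map_inj_uniq (f := pair i)) // => ? ? [].
have verts : #|sub_verts (star i a b d)| = 1 + #|[:: a; b; d]|.
  rewrite card_sum_set -(card1 i); congr (_ + _); apply: eq_card => x.
    by rewrite inE inl_star.
  by rewrite inE inr_star.
by rewrite card_set3 // verts (card_uniqP abd).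
Qed.

Definition path3 i a b : {set K2edge t} := [set (i, a); (~~ i, a); (~~ i, b)].

Lemma inl_path3 i a b j : inl j \in sub_verts (path3 i a b).
Proof.
rewrite inl_sub_verts; apply/existsP; exists a.
by rewrite !inE !xpair_eqE eqxx !andbT; case: j; case: i.
Qed.

Lemma inr_path3 i a b w :
  (inr w \in sub_verts (path3 i a b)) = (w \in [:: a; b]).
Proof.
rewrite inr_sub_verts !inE; apply/existsP/idP => [[j]|w_ab].
  by rewrite !inE !xpair_eqE => /orP [/orP [] |] /andP [_ ->]; rewrite ?orbT.
by exists (~~ i); move: w_ab; rewrite !inE !xpair_eqE eqxx /= => /orP [] ->; rewrite ?orbT.
Qed.

Lemma path3_tree i a b : a != b -> is_tree (path3 i a b).
Proof.
move=> ab.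
have edge w : w \in [:: a; b] -> sub_adj (path3 i a b) (inl (~~ i)) (inr w).
  by rewrite !inE => /orP [] /eqP ->; rewrite /= !inE !xpair_eqE !eqxx ?orbT.
apply: (@hub_tree _ (inl (~~ i))) => [[j|w] xV|].
- have [->|ji] := eqVneq j (~~ i); first exact: connect0.
  have -> : j = i by move: ji; clear xV; case: j; case: (i).
  apply: (connect_trans (connect1 (edge a _))); first by rewrite !inE eqxx.
  by apply: connect1; rewrite /= !inE !xpair_eqE !eqxx ?orbT.
- by move: xV; rewrite inr_path3 => /edge /connect1.
have edges3 : uniq [:: (i, a); (~~ i, a); (~~ i, b)].
  by rewrite uniq3 !xpair_eqE (negbTE ab); case: (i).
have verts : #|sub_verts (path3 i a b)| = #|{: bool}| + #|[:: a; b]|.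
  rewrite card_sum_set; congr (_ + _); apply: eq_card => x.
    by rewrite inE inl_path3.
  by rewrite inE inr_path3.
by rewrite card_set3 // verts card_bool (card_uniqP _) //= inE ab.
Qed.

End Subgraphs.

Lemma rainbow_card (C : finType) (B : {set C}) t (c : bool -> 'I_t -> C)
    (E : {set K2edge t}) :
  (forall i w, c i w \in B) -> rainbow c E -> #|E| <= #|B|.
Proof.
move=> cB rainE; rewrite -(card_in_imset rainE); apply: subset_leq_card.
by apply/subsetP => _ /imsetP [e _ ->].
Qed.

(* With at most 3 colours, the rainbow tree spanning three vertices of W is a
   star, so one row of the colouring is injective on them. *)
Lemma triple_rainbow_row (C : finType) (B : {set C}) t (c : bool -> 'I_t -> C)
    (a b d : 'I_t) :
  #|B| <= 3 -> (forall i w, c i w \in B) -> three_rainbow c ->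
  uniq [:: a; b; d] -> exists i, uniq [:: c i a; c i b; c i d].
Proof.
move=> B_le3 cB rain abd.
have S3 : #|[set inr a; inr b; inr d] : {set K2vert t}| = 3.
  by rewrite card_set3 // (map_inj_uniq (f := inr)) // => ? ? [].
have [E [[_ cardE] SV rainE]] := rain _ S3.
have abd_in_E w : w \in [:: a; b; d] -> inr w \in sub_verts E.
  by move=> w_abd; apply: (subsetP SV); move: w_abd; rewrite !inE orbA.
have one_centre : #|[pred j | inl j \in sub_verts E]| <= 1.
  have := rainbow_card cB rainE; rewrite cardE card_sum_set.
  (* name both counts so that lia sees them as the same atoms *)
  set centres := #|_|; set leaves := #|_|.
  suff : 3 <= leaves by move: B_le3; lia.
  rewrite -[3](card_uniqP abd); apply: subset_leq_card; apply/subsetP => w.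
  by rewrite inE => /abd_in_E.
have [ia aE] : exists ia, (ia, a) \in E.
  by apply/existsP; rewrite -inr_sub_verts abd_in_E ?mem_head.
have edge w : w \in [:: a; b; d] -> (ia, w) \in E.
  move=> /abd_in_E; rewrite inr_sub_verts => /existsP [j wE].
  suff -> : ia = j by [].
  by apply: (card_le1_eqP one_centre); rewrite inE inl_sub_verts; apply/existsP;
    [exists w | exists a].
exists ia; move: abd; rewrite -(map_inj_in_uniq (f := c ia)) // => w v /edge wE /edge vE e.
by case: (rainE _ _ wE vE e).
Qed.

Section TwoRows.
Variables (C : finType) (B : {set C}).
Hypothesis B_le3 : #|B| <= 3.

Lemma rainbow_triple_fills (p q r x : C) :
  uniq [:: p; q; r] -> {subset [:: p; q; r] <= B} -> x \in B -> x \in [:: p; q; r].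
Proof.
move=> /card_uniqP pqr3 pqrB xB.
have eq_card3 : #|[:: p; q; r]| = #|B|.
  by apply/eqP; rewrite eqn_leq subset_leq_card ?(introT subsetP pqrB) // pqr3.
by rewrite ((subset_cardP eq_card3) (introT subsetP pqrB)).
Qed.

Variables (T : finType) (f g : T -> C).
Hypotheses (fB : forall x, f x \in B) (gB : forall x, g x \in B).
Hypothesis one_row_rainbow : forall x y z, uniq [:: x; y; z] ->
  uniq [:: f x; f y; f z] || uniq [:: g x; g y; g z].

(* If f x = f y, then g separates x and y from every other point, and with
   only three colours g must be constant on the remaining points. *)
Lemma other_row_constant (x y : T) :
  x != y -> f x = f y -> {in ~: [set x; y] &, forall u v, g u = g v}.
Proof.
move=> xy fxy.
have g_rainbow u : u \in ~: [set x; y] -> uniq [:: g x; g y; g u].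
  rewrite !inE negb_or => /andP [ux uy].
  have := @one_row_rainbow x y u; rewrite !uniq3 fxy eqxx /= => -> //.
  by rewrite xy !(eq_sym _ u) ux uy.
have others_le1 (u : T) : u \in ~: [set x; y] -> #|B :\ g x :\ g y| <= 1.
  move=> /g_rainbow /[!uniq3] /and3P [gxy _ _].
  move: B_le3; rewrite (cardsD1 (g x)) (cardsD1 (g y) (B :\ g x)).
  by rewrite gB !inE eq_sym gxy gB.
have others u : u \in ~: [set x; y] -> g u \in B :\ g x :\ g y.
  move=> /g_rainbow /[!uniq3] /and3P [_ gxu gyu].
  by rewrite !inE gB andbT !(eq_sym (g u)) gxu gyu.
move=> u v uR vR; apply: (card_le1_eqP (others_le1 _ uR)); exact: others.
Qed.

Lemma two_rows_bound : #|T| <= 4.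
Proof.
rewrite leqNgt; apply/negP => T_gt4.
have /injectivePn [x [y xy fxy]] : ~~ injectiveb f.
  apply/injectiveP => /card_imset card_f; move: T_gt4.
  rewrite -cardsT -(card_f setT) ltnNge => /negP; apply.
  by apply: (leq_trans _ (leqW B_le3)); apply/subset_leq_card/subsetP => _ /imsetP [? _ ->].
pose R := ~: [set x; y].
have inR u : (u \in R) = (u != x) && (u != y) by rewrite !inE negb_or.
have g_const := other_row_constant xy fxy.
have /card_gt2P [z1 [z2 [z3 [[z1R z2R z3R] [z12 z23 z31]]]]] : 2 < #|R|.
  by move: T_gt4; rewrite -(cardsC [set x; y]) cards2 xy.
have f_rainbow : uniq [:: f z1; f z2; f z3].
  have z123 : uniq [:: z1; z2; z3] by rewrite uniq3 z12 z23 eq_sym z31.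
  move: (one_row_rainbow z123).
  by rewrite [in X in _ || X]uniq3 (g_const _ _ z1R z2R) eqxx orbF.
have f_avoids u v : u \in R -> v \in R -> u != v -> f x != f u.
  move=> uR vR uv; apply/eqP => fxu.
  have xuv : uniq [:: x; u; v].
    move: uR vR; rewrite uniq3 !inR uv => /andP [ux _] /andP [vx _].
    by rewrite !(eq_sym x) ux vx.
  move: (one_row_rainbow xuv).
  by rewrite !uniq3 fxu (g_const _ _ uR vR) !eqxx /= !andbF.
have : f x \in [:: f z1; f z2; f z3].
  by apply: rainbow_triple_fills => //; apply/allP; rewrite /= !fB.
rewrite !in_cons in_nil orbF => /or3P [] /eqP.
- by apply/eqP; apply: f_avoids z2R _.
- by apply/eqP; apply: f_avoids z3R _.
- by apply/eqP; apply: f_avoids z1R _.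
Qed.

End TwoRows.

Lemma beta_le4 (C : finType) (B : {set C}) (t : nat) :
  #|B| <= 3 -> B_good B t -> t <= 4.
Proof.
move=> B_le3 [c [cB rain]]; rewrite -(card_ord t).
apply: (two_rows_bound B_le3 (f := c false) (g := c true)) => // x y z xyz.
by have [[] ->] := triple_rainbow_row B_le3 cB rain xyz; rewrite ?orbT.
Qed.

Definition half (x : K2vert 4) : bool :=
  match x with inl i => i | inr k => k < 2 end.

(* Colour 0 between the halves, colours 1 and 2 inside a half. *)
Definition col (i : bool) (k : 'I_4) : 'I_3 :=
  Ordinal (ltn_pmod (if (k < 2) == i then 1 + odd k else 0) (isT : 0 < 3)).

Definition w4 (k : nat) : 'I_4 := Ordinal (ltn_pmod k (isT : 0 < 4)).

(* A rainbow tree spanning r and the half not containing r. *)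
Definition tree_at (r : K2vert 4) : {set K2edge 4} :=
  match r with
  | inl false => path3 false (w4 0) (w4 1)
  | inl true => path3 true (w4 2) (w4 3)
  | inr k => if k < 2 then star false k (w4 2) (w4 3)
             else star true (w4 0) (w4 1) k
  end.

Lemma tree_at_tree (r : K2vert 4) : is_tree (tree_at r).
Proof.
case: r => [[]|[[|[|[|[|k]]]] hk]] //=.
- exact: path3_tree.
- exact: path3_tree.
all: exact: star_tree.
Qed.

Lemma tree_at_rainbow (r : K2vert 4) : rainbow col (tree_at r).
Proof. by case: r => [[]|[[|[|[|[|k]]]] hk]] //=; apply: inj_set3. Qed.

Lemma tree_at_spans (r : K2vert 4) :
  [set x | (half x != half r) || (x == r)] \subset sub_verts (tree_at r).
Proof.
apply/subsetP; case: r => [[]|[[|[|[|[|k]]]] hk]] //= -[j|[[|[|[|[|v]]]] hv]] //; rewrite inE.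
all: rewrite ?inl_star ?inr_star ?inl_path3 ?inr_path3 //.
all: by case: j.
Qed.

(* Pigeonhole on two sides: a set of at most three points has at most one
   point on some side, so it lies in r together with the opposite side. *)
Lemma half_cover (T : finType) (h : T -> bool) (S : {set T}) :
  (forall b, exists r, h r = b) -> #|S| <= 3 ->
  exists r, S \subset [set x | (h x != h r) || (x == r)].
Proof.
move=> h_onto S_le3.
pose side b := S :&: [set x | h x == b].
have [b side_le1] : exists b, #|side b| <= 1.
  have sides : #|side true| + #|side false| = #|S|.
    rewrite -(cardsID [set x | h x == true] S); congr (_ + _); apply: eq_card => x.
    by rewrite !inE andbC; case: (h x).
  by case: (leqP #|side true| 1) => [|side_gt1]; [exists true | exists false; lia].
have [side0 | [r]] := set_0Vmem (side b).
  have [r hr] := h_onto b; exists r; apply/subsetP => x xS; rewrite inE hr.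
  apply/orP; left; apply/negP => /eqP hxb.
  have xb : x \in side b by rewrite !inE xS hxb eqxx.
  by rewrite side0 inE in xb.
rewrite !inE => /andP [rS /eqP hr]; exists r; apply/subsetP => x xS.
rewrite inE hr; have [hxb|] := eqVneq (h x) b; last by [].
apply/eqP; apply: (card_le1_eqP side_le1); by rewrite !inE ?xS ?rS ?hxb ?hr eqxx.
Qed.

(* Every 3-set lies in the span of some tree_at r. *)
Lemma col_three_rainbow : three_rainbow col.
Proof.
move=> S S3.
have half_onto b : exists r, half r = b by exists (inl b).
have [r Sr] := half_cover half_onto (eq_leq S3).
exists (tree_at r); split; first exact: tree_at_tree.
- exact: subset_trans Sr (tree_at_spans r).
- exact: tree_at_rainbow.
Qed.

Lemma three_rainbow_comp (C C' : eqType) t (c : bool -> 'I_t -> C) (h : C -> C') :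
  injective h -> three_rainbow c -> three_rainbow (fun i w => h (c i w)).
Proof.
move=> h_inj rain S S3; have [E [treeE SE rainE]] := rain S S3.
by exists E; split=> // e e' eE e'E /h_inj; apply: rainE.
Qed.

Lemma beta_ge4 (C : finType) (B : {set C}) : 3 <= #|B| -> B_good B 4.
Proof.
move=> B_ge3; pose h (k : 'I_3) : C := enum_val (widen_ord B_ge3 k).
have h_inj : injective h by move=> k k' /enum_val_inj [] /ord_inj.
exists (fun i w => h (col i w)); split; first by move=> i w; apply: enum_valP.
exact: three_rainbow_comp h_inj col_three_rainbow.
Qed.

Theorem claim3 (C : finType) (B : {set C}) :
  #|B| = 3 -> B_good B 4 /\ (forall t : nat, B_good B t -> t <= 4).
Proof.
move=> B3; split; first by apply: beta_ge4; rewrite B3.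
by move=> t; apply: beta_le4; rewrite B3.
Qed.
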